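(* Let $\mathbb{F}$ be a field and let $n,k$ be integers with $n>k>1$. Let $l$ be a positive integer such that $l<2^{n-k}$ and the binary decomposition of $l$ contains at most $k$ digits equal to $1$. Then there exists a unital $\mathbb{F}$-algebra $\mathcal{A}$ with $\dim\mathcal{A}=n$ and $l(\mathcal{A})=l$.
   Context: All algebras are finite-dimensional, unital, not necessarily associative algebras over the field $\mathbb{F}$. For a finite generating set $S$ of an algebra $\mathcal{A}$, a word in $S$ is any product (with any bracketing) of finitely many elements of $S$; its length is the number of factors, and $1$ is a word of length $0$. $L_i(S)$ is the linear span of all words in $S$ of length at most $i$. The length of $S$ is $l(S)=\min\{k\ge0: L_k(S)=\mathcal{A}\}$, and $l(\mathcal{A})=\max\{l(S): S\text{ a finite generating set of }\mathcal{A}\}$. *)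

From HB Require Import structures.
From mathcomp Require Import all_boot all_order all_algebra.
Set Implicit Arguments. Unset Strict Implicit. Unset Printing Implicit Defensive.
Import GRing.Theory.
Local Open Scope ring_scope.

(* An n-dimensional (not necessarily associative) F-algebra is modelled on the
   F-vector space 'rV[F]_n with a multiplication mul and a candidate unit one. *)

Definition bilinear_mul (F : fieldType) (n : nat)
    (mul : 'rV[F]_n -> 'rV[F]_n -> 'rV[F]_n) : Prop :=
  (forall (a : F) x y z, mul (a *: x + y) z = a *: mul x z + mul y z) /\
  (forall (a : F) x y z, mul x (a *: y + z) = a *: mul x y + mul x z).

Definition unital_mul (F : fieldType) (n : nat)
    (mul : 'rV[F]_n -> 'rV[F]_n -> 'rV[F]_n) (one : 'rV[F]_n) : Prop :=
  forall x, mul one x = x /\ mul x one = x.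

Inductive word (T : Type) : Type :=
  | WLeaf of T
  | WMul of word T & word T.

Fixpoint wlen T (w : word T) : nat :=
  match w with WLeaf _ => 1%N | WMul u v => (wlen u + wlen v)%N end.

Fixpoint wleaves T (w : word T) : seq T :=
  match w with WLeaf x => [:: x] | WMul u v => wleaves u ++ wleaves v end.

Fixpoint weval T (mul : T -> T -> T) (w : word T) : T :=
  match w with WLeaf x => x | WMul u v => mul (weval mul u) (weval mul v) end.

(* v is a word in S of length at most i (1 is the word of length 0). *)
Definition is_word_le (F : fieldType) (n : nat)
    (mul : 'rV[F]_n -> 'rV[F]_n -> 'rV[F]_n) (one : 'rV[F]_n)
    (S : seq 'rV[F]_n) (i : nat) (v : 'rV[F]_n) : Prop :=
  v = one \/
  exists w : word 'rV[F]_n,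
    all (fun x => x \in S) (wleaves w) /\ (wlen w <= i)%N /\ v = weval mul w.

Definition in_span (F : fieldType) (n : nat) (P : 'rV[F]_n -> Prop)
    (v : 'rV[F]_n) : Prop :=
  exists (m : nat) (u : 'I_m -> 'rV[F]_n) (c : 'I_m -> F),
    (forall j, P (u j)) /\ v = \sum_(j < m) c j *: u j.

Definition L_full (F : fieldType) (n : nat)
    (mul : 'rV[F]_n -> 'rV[F]_n -> 'rV[F]_n) (one : 'rV[F]_n)
    (S : seq 'rV[F]_n) (i : nat) : Prop :=
  forall v, in_span (is_word_le mul one S i) v.

Definition generating (F : fieldType) (n : nat)
    (mul : 'rV[F]_n -> 'rV[F]_n -> 'rV[F]_n) (one : 'rV[F]_n)
    (S : seq 'rV[F]_n) : Prop :=
  exists i, L_full mul one S i.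

Definition set_length (F : fieldType) (n : nat)
    (mul : 'rV[F]_n -> 'rV[F]_n -> 'rV[F]_n) (one : 'rV[F]_n)
    (S : seq 'rV[F]_n) (k : nat) : Prop :=
  L_full mul one S k /\ forall j, (j < k)%N -> ~ L_full mul one S j.

Definition alg_length (F : fieldType) (n : nat)
    (mul : 'rV[F]_n -> 'rV[F]_n -> 'rV[F]_n) (one : 'rV[F]_n) (l : nat) : Prop :=
  (exists S, generating mul one S /\ set_length mul one S l) /\
  (forall S k, set_length mul one S k -> (k <= l)%N).

Definition binary_ones (l : nat) : nat :=
  (\sum_(i < l.+1) odd (l %/ 2 ^ i))%N.

From HB Require Import structures.
From mathcomp Require Import all_boot all_order all_algebra.
From mathcomp Require Import ring zify.
Set Implicit Arguments. Unset Strict Implicit. Unset Printing Implicit Defensive.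
Import GRing.Theory.

(* Let 1 = a_1 < a_2 < ... < a_c = l be a star addition chain: a_i = a_{i-1} + a_{q i}
   with q i < i.  The binary expansion of l gives one with
   c < (n - k) + (number of ones of l) <= n.  On the basis e_0 = 1, e_1, ..., e_{n-1}
   set e_{i-1} e_{q i} = e_i for 1 < i <= c, all other products of the e_j (j > 0)
   being 0.  Giving e_j the degree a_j (j <= c) or 1 (j > c) grades the algebra, so
   from the generating set {e_1, e_{c+1}, ..., e_{n-1}} the element e_c needs words of
   length a_c.  Conversely, every generating set contains some s with a nonzero
   e_1-coordinate; the products of v = s - s_0 along the chain have lowest coordinate
   i at word length a_i, so by triangularity every generating set has length at
   most a_c. *)

Definition star_chain (c : nat) (q a : nat -> nat) : Prop :=
  a 1 = 1 /\ forall i, 1 < i <= c -> 0 < q i < i /\ a i = a i.-1 + a (q i).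

Lemma star_chain_rcons c q a s : 0 < c -> 0 < s <= c -> star_chain c q a ->
  star_chain c.+1 (fun i => if i == c.+1 then s else q i)
                  (fun i => if i == c.+1 then a c + a s else a i).
Proof.
move=> c_gt0 hs [a1 a_step]; split; first by rewrite ifF ?a1 //; lia.
move=> i hi; case: eqP => [->|/eqP i_neq].
  by rewrite !ifF //; lia.
have [hq ->] := a_step i (ltac:(lia)).
by rewrite !ifF //; lia.
Qed.

Lemma binary_ones_widen l m : l < m ->
  binary_ones l = \sum_(i < m) odd (l %/ 2 ^ i).
Proof.
move=> lm; rewrite /binary_ones (big_ord_widen _ (fun i => nat_of_bool (odd (l %/ 2 ^ i))) lm).
rewrite [RHS](bigID (fun i : 'I_m => i < l.+1)) /= [X in _ = _ + X]big1 ?addn0 //.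
move=> i; rewrite -leqNgt => hi; rewrite divn_small //.
by apply: leq_trans (ltn_expl l (isT : 1 < 2)) _; rewrite leq_exp2l // ltnW.
Qed.

Lemma binary_ones1 : binary_ones 1 = 1.
Proof. by rewrite /binary_ones !big_ord_recr big_ord0. Qed.

Lemma binary_ones_double l : 0 < l -> binary_ones l.*2 = binary_ones l.
Proof.
move=> l_gt0; rewrite {1}/binary_ones big_ord_recl /= divn1 odd_double add0n.
rewrite (@binary_ones_widen l l.*2); last by lia.
by apply: eq_bigr => i _; rewrite /bump /= add1n expnS divnMA divn2 doubleK.
Qed.

Lemma binary_ones_doubleS l : binary_ones l.*2.+1 = (binary_ones l).+1.
Proof.
rewrite {1}/binary_ones big_ord_recl /= divn1 /= odd_double /=.
rewrite (@binary_ones_widen l l.*2.+1); last by lia.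
rewrite add1n; congr S; apply: eq_bigr => i _.
by rewrite /bump /= add1n expnS divnMA divn2 -[l.*2.+1]/(true + l.*2) half_bit_double.
Qed.

(* Read the binary digits of l from the top: double, then add 1 if the digit is 1. *)
Lemma binary_star_chain l m : 0 < l -> l < 2 ^ m ->
  exists c q a, [/\ 0 < c, c < m + binary_ones l, star_chain c q a & a c = l].
Proof.
elim/ltn_ind: l m => l IH m l_gt0 lm.
have [l1|l_gt1] := leqP l 1.
  have -> : l = 1 by lia.
  exists 1, id, (fun _ => 1); split=> //; last by split=> // i; lia.
  by rewrite binary_ones1; case: m lm => [|m]; [rewrite expn0; lia | lia].
case: m lm => [|m] lm; first by rewrite expn0 in lm; lia.
have [c [q [a [c_gt0 c_lt chain al]]]] : exists c q a,
    [/\ 0 < c, c < m + binary_ones l./2, star_chain c q a & a c = l./2].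
  apply: IH; move: lm l_gt1; rewrite expnS -{1 3}[l]odd_double_half;
  by case: (odd l); lia.
have chain2 := star_chain_rcons c_gt0 (ltac:(lia) : 0 < c <= c) chain.
have [odd_l|even_l] := boolP (odd l).
  have hl : l = l./2.*2.+1 by rewrite -[LHS]odd_double_half odd_l.
  have := star_chain_rcons (ltac:(lia) : 0 < c.+1) (ltac:(lia) : 0 < 1 <= c.+1) chain2.
  set q' := fun i => _; set a' := fun i => _ => chain3.
  exists c.+2, q', a'; split=> //; first by rewrite hl binary_ones_doubleS; lia.
  by rewrite /a' !eqxx /= ifF ?(proj1 chain); lia.
have hl : l = l./2.*2 by rewrite -[LHS]odd_double_half (negbTE even_l).
set q' := fun i => _ in chain2; set a' := fun i => _ in chain2.
exists c.+1, q', a'; split=> //; first by rewrite hl binary_ones_double; lia.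
by rewrite /a' eqxx; lia.
Qed.

Section LinearSpan.
Variables (R : pzRingType) (V : lmodType R).
Implicit Types (P Q : V -> Prop).

Inductive lspan P : V -> Prop :=
| lspan0 : lspan P 0
| lspan_gen x : P x -> lspan P x
| lspanD x y : lspan P x -> lspan P y -> lspan P (x + y)
| lspanZ a x : lspan P x -> lspan P (a *: x).

Lemma lspanB P x y : lspan P x -> lspan P y -> lspan P (x - y).
Proof. by move=> hx hy; apply: lspanD hx _; rewrite -scaleN1r; apply: lspanZ. Qed.

Lemma lspan_sub P Q : (forall x, P x -> lspan Q x) -> forall x, lspan P x -> lspan Q x.
Proof.
by move=> PQ x; elim=> *; [apply: lspan0 | apply: PQ | apply: lspanD | apply: lspanZ].
Qed.

End LinearSpan.

Section RowSpan.
Variables (F : fieldType) (n : nat).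
Local Notation V := 'rV[F]_n.
Local Open Scope ring_scope.

Lemma lspan_in_span (P : V -> Prop) v : lspan P v <-> in_span P v.
Proof.
split.
  elim=> [|x Px|x y _ [m1 [u1 [c1 [h1 ->]]]] _ [m2 [u2 [c2 [h2 ->]]]]|a x _ [m [u [c [h ->]]]]].
  - by exists 0%N, (fun _ => 0), (fun _ => 0); split; [case | rewrite big_ord0].
  - by exists 1%N, (fun _ => x), (fun _ => 1); split=> //; rewrite big_ord1 scale1r.
  - exists (m1 + m2)%N, (fun j => match split j with inl i => u1 i | inr i => u2 i end),
      (fun j => match split j with inl i => c1 i | inr i => c2 i end); split.
      by move=> j; case: (split j).
    rewrite big_split_ord /=; congr (_ + _); apply: eq_bigr => i _.
      by rewrite -[lshift _ _]/(unsplit (inl i)) unsplitK.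
    by rewrite -[rshift _ _]/(unsplit (inr i)) unsplitK.
  - exists m, u, (fun j => a * c j); split=> //.
    by rewrite scaler_sumr; apply: eq_bigr => j _; rewrite scalerA.
case=> m [u [c [h ->]]]; elim/big_ind: _ => [|x y|j _].
- exact: lspan0.
- exact: lspanD.
- exact/lspanZ/lspan_gen.
Qed.

Lemma lspan_bilinear (mul : V -> V -> V) (P Q R : V -> Prop) :
  bilinear_mul mul -> (forall x y, P x -> Q y -> lspan R (mul x y)) ->
  forall x y, lspan P x -> lspan Q y -> lspan R (mul x y).
Proof.
move=> [mulDl mulDr] hPQ.
have mul0l y : mul 0 y = 0 by have := mulDl (-1) 0 0 y; rewrite scaler0 addr0 scaleN1r addNr.
have mul0r x : mul x 0 = 0 by have := mulDr (-1) x 0 0; rewrite scaler0 addr0 scaleN1r addNr.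
move=> x y hx; elim: hx y => [|x' Px|x1 x2 _ IH1 _ IH2|a x' _ IH] y hy.
- by rewrite mul0l; apply: lspan0.
- elim: hy => [|y' Qy|y1 y2 _ IH1 _ IH2|a y' _ IH].
  + by rewrite mul0r; apply: lspan0.
  + exact: hPQ.
  + by have := mulDr 1 x' y1 y2; rewrite !scale1r => ->; apply: lspanD.
  + by have := mulDr a x' y' 0; rewrite !addr0 mul0r addr0 => ->; apply: lspanZ.
- by have := mulDl 1 x1 x2 y; rewrite !scale1r => ->; apply: lspanD; auto.
- by have := mulDl a x' 0 y; rewrite !addr0 mul0l addr0 => ->; apply: lspanZ; auto.
Qed.

End RowSpan.

Lemma weval_ind (T : eqType) (mul : T -> T -> T) (S : seq T) (Q : nat -> T -> Prop) :
  (forall x, x \in S -> Q 1 x) ->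
  (forall i j x y, Q i x -> Q j y -> Q (i + j) (mul x y)) ->
  forall w, all (fun x => x \in S) (wleaves w) -> Q (wlen w) (weval mul w).
Proof.
move=> QS Qmul; elim=> [x|u IHu v IHv] /=; first by rewrite andbT; apply: QS.
by rewrite all_cat => /andP [hu hv]; apply: Qmul; auto.
Qed.

Section UnitalWords.
Variables (F : fieldType) (n : nat) (mul : 'rV[F]_n -> 'rV[F]_n -> 'rV[F]_n).
Variables (one : 'rV[F]_n) (S : seq 'rV[F]_n).
Hypotheses (mul_bilinear : bilinear_mul mul) (mul_unital : unital_mul mul one).
Local Notation L := (is_word_le mul one S).

Lemma is_word_le_mono i j x : i <= j -> L i x -> L j x.
Proof.
move=> ij [->|[w [wS [wi ->]]]]; first by left.
by right; exists w; split=> //; split=> //; apply: leq_trans wi ij.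
Qed.

Lemma lspan_word_le_mono i j x : i <= j -> lspan (L i) x -> lspan (L j) x.
Proof. by move=> ij; apply: lspan_sub => y /(is_word_le_mono ij)/lspan_gen. Qed.

Lemma lspan_word_le_mul i j x y :
  lspan (L i) x -> lspan (L j) y -> lspan (L (i + j)) (mul x y).
Proof.
apply: lspan_bilinear => // {}x {}y [->|[u [uS [ui ->]]]] [->|[v [vS [vj ->]]]].
- by rewrite (mul_unital one).1; apply/lspan_gen; left.
- rewrite (mul_unital _).1; apply/lspan_gen/(@is_word_le_mono j); first exact: leq_addl.
  by right; exists v.
- rewrite (mul_unital _).2; apply/lspan_gen/(@is_word_le_mono i); first exact: leq_addr.
  by right; exists u.
- apply/lspan_gen; right; exists (WMul u v); rewrite /= all_cat uS vS.
  by split=> //; split=> //; apply: leq_add.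
Qed.

End UnitalWords.

Section StarChain.
Variables (c : nat) (q a : nat -> nat).
Hypothesis chain : star_chain c q a.

Lemma chain_q i : 1 < i <= c -> 0 < q i < i.
Proof. by move=> hi; have [_ /(_ i hi) []] := chain. Qed.

Lemma chain_a i : 1 < i <= c -> a i = a i.-1 + a (q i).
Proof. by move=> hi; have [_ /(_ i hi) []] := chain. Qed.

Lemma chain_a_gt0 i : 0 < i <= c -> 0 < a i.
Proof.
elim/ltn_ind: i => i IH hi; have [i1|i_gt1] := leqP i 1.
  by rewrite (_ : i = 1) ?chain.1 //; lia.
rewrite chain_a; last by lia.
by rewrite addn_gt0 IH //; lia.
Qed.

Lemma chain_a_mono i j : 0 < i <= j -> j <= c -> a i <= a j.
Proof.
move=> hij; elim: j hij => [|j IH] hij jc; first by lia.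
have [ij|ji] := leqP i j; last by rewrite (_ : i = j.+1) //; lia.
rewrite [a j.+1]chain_a /=; last by lia.
by apply: leq_trans (IH _ _) (leq_addr _ _); lia.
Qed.

Section ChainAlgebra.
Variables (F : fieldType) (N : nat).
Hypotheses (c_gt0 : 0 < c) (c_le : c <= N).
Local Notation V := 'rV[F]_N.+1.
Local Open Scope ring_scope.

Definition crd (x : V) (i : nat) : F := oapp (x 0) 0 (insub i).

Definition bvec (i : nat) : V := \row_(j < N.+1) (i == j)%:R.

Definition chain_prod (x y : V) : V :=
  \row_(j < N.+1) if (1 < j <= c)%N then crd x j.-1 * crd y (q j) else 0.

(* (x0 + x')(y0 + y') = x0 y0 + x0 y' + y0 x' + x' y', with x' y' := chain_prod x y. *)
Definition chain_mul (x y : V) : V :=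
  crd x 0 *: y + crd y 0 *: x - (crd x 0 * crd y 0) *: bvec 0 + chain_prod x y.

Lemma crdE x i : crd x i = if (i < N.+1)%N then x 0 (inord i) else 0.
Proof. by rewrite /crd; case: insubP => [j -> <-|/negbTE ->] //=; rewrite inord_val. Qed.

Lemma crdP x y : (forall i, crd x i = crd y i) -> x = y.
Proof. by move=> hxy; apply/rowP => j; have := hxy j; rewrite !crdE ltn_ord inord_val. Qed.

Lemma crd_lin b x y i : crd (b *: x + y) i = b * crd x i + crd y i.
Proof. by rewrite !crdE; case: ifP; rewrite ?mxE ?mulr0 ?addr0. Qed.

Lemma crd0 i : crd 0 i = 0.
Proof. by rewrite crdE; case: ifP; rewrite ?mxE. Qed.

Lemma crdD x y i : crd (x + y) i = crd x i + crd y i.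
Proof. by have := crd_lin 1 x y i; rewrite scale1r mul1r. Qed.

Lemma crdZ b x i : crd (b *: x) i = b * crd x i.
Proof. by have := crd_lin b x 0 i; rewrite !addr0 crd0 addr0. Qed.

Lemma crdB x y i : crd (x - y) i = crd x i - crd y i.
Proof. by rewrite crdD -[- y]scaleN1r crdZ mulN1r. Qed.

Lemma crd_bvec i j : (i <= N)%N -> crd (bvec i) j = (i == j)%:R.
Proof.
move=> iN; rewrite crdE; case: ltnP => jN; first by rewrite mxE inordK.
by rewrite (_ : i == j = false) //; lia.
Qed.

Lemma crd_chain_prod x y j :
  crd (chain_prod x y) j = if (1 < j <= c)%N then crd x j.-1 * crd y (q j) else 0.
Proof.
rewrite crdE; case: ltnP => jN; first by rewrite mxE inordK.
by rewrite ifF //; lia.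
Qed.

Lemma crd_span_eq0 (P : V -> Prop) j x :
  (forall y, P y -> crd y j = 0) -> lspan P x -> crd x j = 0.
Proof.
move=> P0; elim=> [|y /P0 //|y z _ hy _ hz|b y _ hy].
- exact: crd0.
- by rewrite crdD hy hz addr0.
- by rewrite crdZ hy mulr0.
Qed.

Lemma chain_mul_bilinear : bilinear_mul chain_mul.
Proof.
have prodDl b x y z : chain_prod (b *: x + y) z = b *: chain_prod x z + chain_prod y z.
  by apply/rowP => j; rewrite !mxE; case: ifP => _; rewrite ?crd_lin; ring.
have prodDr b x y z : chain_prod x (b *: y + z) = b *: chain_prod x y + chain_prod x z.
  by apply/rowP => j; rewrite !mxE; case: ifP => _; rewrite ?crd_lin; ring.
by split=> b x y z; rewrite /chain_mul ?prodDl ?prodDr !crd_lin;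
  apply/rowP => j; rewrite !mxE; ring.
Qed.

Lemma chain_prod_1l x : chain_prod (bvec 0) x = 0.
Proof.
apply: crdP => j; rewrite crd_chain_prod crd0 crd_bvec //.
by case: ifP => // hj; rewrite (_ : (0 == j.-1)%N = false) ?mul0r //; lia.
Qed.

Lemma chain_prod_1r x : chain_prod x (bvec 0) = 0.
Proof.
apply: crdP => j; rewrite crd_chain_prod crd0 crd_bvec //.
case: ifP => // /chain_q hq.
by rewrite (_ : (0 == q j)%N = false) ?mulr0 //; lia.
Qed.

Lemma chain_mul_unital : unital_mul chain_mul (bvec 0).
Proof.
move=> x; rewrite /chain_mul chain_prod_1l chain_prod_1r crd_bvec // eqxx.
by rewrite !addr0 mul1r mulr1 scale1r addrK addrAC subrr add0r.
Qed.

Lemma chain_mul_aug x y :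
  crd x 0 = 0 -> crd y 0 = 0 -> chain_mul x y = chain_prod x y.
Proof. by move=> x0 y0; rewrite /chain_mul x0 y0 mul0r !scale0r subr0 !add0r. Qed.

Lemma lspan_bvec x : lspan (fun v => exists2 j, (j <= N)%N & v = bvec j) x.
Proof.
rewrite (row_sum_delta x); elim/big_ind: _ => [|y z|j _].
- exact: lspan0.
- exact: lspanD.
apply/lspanZ/lspan_gen; exists j; first by rewrite -ltnS.
by apply/rowP => k; rewrite !mxE eqxx eq_sym.
Qed.

Definition supported t (x : V) := forall j, (j < t)%N || (c < j)%N -> crd x j = 0.

Lemma lspan_supported (P : V -> Prop) m :
  (forall t, (m <= t <= c)%N -> exists2 X, lspan P X & crd X t != 0 /\ supported t X) ->
  forall x, supported m x -> lspan P x.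
Proof.
have [d] := ubnP (c.+1 - m); elim: d m => // d IH m hd hX x hx.
have [mc|cm] := leqP m c; last first.
  have -> : x = 0 by apply: crdP => j; rewrite crd0 hx //; lia.
  exact: lspan0.
have [X XP [Xm Xs]] := hX m (ltac:(lia)).
set r := crd x m / crd X m.
have hx' : supported m.+1 (x - r *: X).
  move=> j; rewrite crdB crdZ ltnS leq_eqVlt => /orP [/orP [/eqP ->|jm]|cj].
  - by rewrite divfK ?subrr.
  - by rewrite hx ?Xs ?jm ?mulr0 ?subr0.
  - by rewrite hx ?Xs ?cj ?orbT ?mulr0 ?subr0.
rewrite -(subrK (r *: X) x); apply/lspanD/lspanZ/XP.
by apply: IH hx' => [|t ht]; [lia | apply: hX; lia].
Qed.

Section WordsIn.
Variable S : seq V.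
Local Notation L := (is_word_le chain_mul (bvec 0) S).

Lemma chain_power v : crd v 0 = 0 -> crd v 1 != 0 -> lspan (L 1) v ->
  forall t, (0 < t <= c)%N -> exists2 X, lspan (L (a t)) X &
    [/\ crd X t != 0, forall j, (j < t)%N -> crd X j = 0 & (1 < t)%N -> supported t X].
Proof.
move=> v0 v1 vL; elim/ltn_ind => t IH ht.
have [t1|t_gt1] := leqP t 1.
  rewrite (_ : t = 1%N) ?chain.1; last by lia.
  by exists v => //; split=> // j; rewrite ltnS leqn0 => /eqP ->.
have t_chain : (1 < t <= c)%N by lia.
have hq := chain_q t_chain.
have [X XL [Xt Xb _]] := IH t.-1 (ltac:(lia)) (ltac:(lia)).
have [Y YL [Yt Yb _]] := IH (q t) (ltac:(lia)) (ltac:(lia)).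
exists (chain_prod X Y).
  rewrite (chain_a t_chain) -chain_mul_aug; [|apply: Xb; lia|apply: Yb; lia].
  exact: (lspan_word_le_mul chain_mul_bilinear chain_mul_unital XL YL).
have prod_below j : (j < t)%N -> crd (chain_prod X Y) j = 0.
  by move=> jt; rewrite crd_chain_prod; case: ifP => // _; rewrite Xb ?mul0r //; lia.
split=> [||_ j /orP [/prod_below //|cj]].
- by rewrite crd_chain_prod ifT ?mulf_neq0 //; lia.
- exact: prod_below.
- by rewrite crd_chain_prod ifF //; lia.
Qed.

Lemma lspan_supported_words v : crd v 0 = 0 -> crd v 1 != 0 -> lspan (L 1) v ->
  forall x, supported 2 x -> lspan (L (a c)) x.
Proof.
move=> v0 v1 vL; apply: lspan_supported => t ht.
have [X XL [Xt _ Xs]] := chain_power v0 v1 vL (ltac:(lia) : (0 < t <= c)%N).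
exists X; last by split=> //; apply: Xs; lia.
by apply: lspan_word_le_mono XL; apply: chain_a_mono; lia.
Qed.

(* The words in S stay in span(1, S, supported 2), which is closed under chain_mul;
   hence some s in S has a nonzero e_1-coordinate. *)
Lemma L_full_chain_length k : L_full chain_mul (bvec 0) S k -> L_full chain_mul (bvec 0) S (a c).
Proof.
move=> Sk.
pose G := lspan (fun x => x = bvec 0 \/ x \in S \/ supported 2 x).
have G_mul x y : G x -> G y -> G (chain_mul x y).
  move=> Gx Gy; apply: lspanD; last first.
    by apply: lspan_gen; right; right => j hj; rewrite crd_chain_prod ifF //; lia.
  by apply/lspanB/lspanZ/lspan_gen; [apply/lspanD/lspanZ/Gx/lspanZ/Gy | left].
have G_all x : G x.
  apply: lspan_sub (proj2 (lspan_in_span _ _) (Sk x)) => _ [->|[w [wS [_ ->]]]].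
    by apply: lspan_gen; left.
  by apply: (weval_ind (Q := fun _ => G)) wS => // y yS; apply: lspan_gen; right; left.
have [s sS s1] : exists2 s, s \in S & crd s 1 != 0.
  apply/hasP; apply: contraT => /hasPn S1.
  suff : crd (bvec 1) 1 = 0 by rewrite crd_bvec; [move/eqP; rewrite oner_eq0 | lia].
  apply: crd_span_eq0 (G_all (bvec 1)) => y [->|[/S1 /negPn /eqP //|ys]].
    by rewrite crd_bvec.
  exact: ys.
set v := s - crd s 0 *: bvec 0.
have vL : lspan (L 1) v.
  apply/lspanB/lspanZ/lspan_gen; last by left.
  by apply: lspan_gen; right; exists (WLeaf s); rewrite /= sS.
have v0 : crd v 0 = 0 by rewrite crdB crdZ crd_bvec // mulr1 subrr.
have v1 : crd v 1 != 0 by rewrite crdB crdZ crd_bvec ?mulr0 ?subr0 //; lia.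
move=> x; apply/lspan_in_span; apply: lspan_sub (G_all x) => y [->|[yS|ys]].
- by apply: lspan_gen; left.
- apply: lspan_gen; right; exists (WLeaf y); rewrite /= yS.
  by split=> //; split=> //; apply: chain_a_gt0; lia.
- exact: lspan_supported_words v0 v1 vL y ys.
Qed.

End WordsIn.

Definition chain_deg (j : nat) : nat := if j == 0%N then 0 else if (j <= c)%N then a j else 1.

Lemma chain_deg_le j : (0 < j <= c)%N -> chain_deg j = a j.
Proof. by move=> hj; rewrite /chain_deg ifF ?ifT //; lia. Qed.

Lemma chain_deg_gt j : (c < j)%N -> chain_deg j = 1%N.
Proof. by move=> hj; rewrite /chain_deg !ifF //; lia. Qed.

Definition homogeneous t (x : V) := forall j, crd x j != 0 -> chain_deg j = t.

Lemma homogeneous_crd0 t x : (0 < t)%N -> homogeneous t x -> crd x 0 = 0.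
Proof. by move=> t_gt0 hx; apply/eqP; apply: contraT => /hx; rewrite /chain_deg /=; lia. Qed.

Lemma homogeneous_mul s t x y : (0 < s)%N -> (0 < t)%N ->
  homogeneous s x -> homogeneous t y -> homogeneous (s + t) (chain_mul x y).
Proof.
move=> s_gt0 t_gt0 hx hy j.
rewrite chain_mul_aug ?(homogeneous_crd0 _ hx) ?(homogeneous_crd0 _ hy) //.
rewrite crd_chain_prod; case: ifP => [hj|]; last by rewrite eqxx.
rewrite mulf_eq0 negb_or => /andP [/hx <- /hy <-]; have := chain_q hj.
by move=> hq; rewrite !chain_deg_le ?[a j]chain_a //; lia.
Qed.

Definition chain_gens : seq V := bvec 1 :: [seq bvec j | j <- iota c.+1 (N - c)].

Lemma homogeneous_chain_word w : all (fun x => x \in chain_gens) (wleaves w) ->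
  homogeneous (wlen w) (weval chain_mul w).
Proof.
have gens_hom x : x \in chain_gens -> (0 < 1)%N /\ homogeneous 1 x.
  rewrite inE => /orP [/eqP ->|/mapP [j]]; last rewrite mem_iota => hj ->; split=> // i.
    rewrite crd_bvec; last by lia.
    by have [<- _|_] := eqVneq 1%N i; [rewrite chain_deg_le ?chain.1 //; lia | rewrite eqxx].
  rewrite crd_bvec; last by lia.
  by have [<- _|_] := eqVneq j i; [rewrite chain_deg_gt //; lia | rewrite eqxx].
have mul_hom i j x y : (0 < i)%N /\ homogeneous i x -> (0 < j)%N /\ homogeneous j y ->
    (0 < i + j)%N /\ homogeneous (i + j) (chain_mul x y).
  by move=> [i_gt0 hx] [j_gt0 hy]; split; [lia | exact: homogeneous_mul].
move=> wS.
exact: (weval_ind (Q := fun t x => (0 < t)%N /\ homogeneous t x) gens_hom mul_hom wS).2.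
Qed.

Lemma chain_gens_not_L_full t : (t < a c)%N -> ~ L_full chain_mul (bvec 0) chain_gens t.
Proof.
move=> tc full.
suff : crd (bvec c) c = 0 by rewrite crd_bvec // eqxx => /eqP; rewrite oner_eq0.
apply: crd_span_eq0 (proj2 (lspan_in_span _ _) (full (bvec c))).
move=> _ [->|[w [wS [wt ->]]]]; first by rewrite crd_bvec // eq_sym gtn_eqF.
apply/eqP; apply: contraT => /(homogeneous_chain_word wS).
rewrite chain_deg_le ?c_gt0 ?leqnn // => ac.
by move: tc; rewrite ac ltnNge wt.
Qed.

Lemma chain_gens_L_full : L_full chain_mul (bvec 0) chain_gens (a c).
Proof.
have gen_word j : bvec j \in chain_gens -> is_word_le chain_mul (bvec 0) chain_gens (a c) (bvec j).
  move=> hj; right; exists (WLeaf (bvec j)); rewrite /= hj.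
  by split=> //; split=> //; apply: chain_a_gt0; lia.
have e1L : lspan (is_word_le chain_mul (bvec 0) chain_gens 1) (bvec 1).
  by apply: lspan_gen; right; exists (WLeaf (bvec 1)); rewrite /= mem_head.
move=> x; apply/lspan_in_span; apply: lspan_sub (lspan_bvec x) => _ [j jN ->].
have [->|j_gt0] := posnP j; first by apply: lspan_gen; left.
have [hj|hj] := boolP (1 < j <= c)%N.
  apply: (lspan_supported_words _ _ e1L); rewrite ?crd_bvec ?oner_eq0 //; try lia.
  move=> i hi; rewrite crd_bvec //; have [ji|//] := eqVneq j i.
  by move: hi; rewrite -ji; lia.
apply/lspan_gen/gen_word; rewrite inE; apply/orP.
have [->|j1] := eqVneq j 1%N; [by left | right].
by apply/map_f; rewrite mem_iota; lia.
Qed.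

Lemma chain_alg_length : alg_length chain_mul (bvec 0) (a c).
Proof.
split.
  exists chain_gens; split; first by exists (a c); exact: chain_gens_L_full.
  by split; [exact: chain_gens_L_full | move=> t /chain_gens_not_L_full].
move=> S k [Sk short]; rewrite leqNgt; apply/negP => lt.
exact: short _ lt (L_full_chain_length Sk).
Qed.

End ChainAlgebra.

End StarChain.

Theorem proposition4p3 (F : fieldType) (n k l : nat) :
  (1 < k)%N -> (k < n)%N -> (0 < l)%N -> (l < 2 ^ (n - k))%N ->
  (binary_ones l <= k)%N ->
  exists (mul : 'rV[F]_n -> 'rV[F]_n -> 'rV[F]_n) (one : 'rV[F]_n),
    bilinear_mul mul /\ unital_mul mul one /\ alg_length mul one l.
Proof.
move=> _ kn l_gt0 l_lt ones_l.
have [c [q [a [c_gt0 c_lt chain <-]]]] := binary_star_chain l_gt0 l_lt.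
case: n kn l_lt c_lt => [|N] kn _ c_lt; first by lia.
have c_le : c <= N by lia.
exists (@chain_mul c q F N), (@bvec F N 0); split; first exact: chain_mul_bilinear.
split; [exact: (chain_mul_unital chain c_gt0 c_le) | exact: chain_alg_length].
Qed.
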